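(* For every $x>0$ the limit $\lambda(x)=\lim_{k\to\infty}\frac{a(s^kx)}{(s^kx)^{\log_s p}}$ exists; moreover $\lambda(sx)=\lambda(x)$ and $\lambda(x)\in[m,M]$ for all $x>0$, where $m=\inf_{n\ge1}b_n$, $M=\sup_{n\ge1}b_n$. Furthermore the set $\{\lambda(x):x\in[s^{-1},1)\}$ is dense in $[m,M]$.
   Context: Fix integers $p\ge 3$ and $2\le s<p$, and a set $A\subset\{0,1,\dots,p-1\}$ with $\#A=s$. Let $h:\{0,1,\dots,s-1\}\to A$ be the unique strictly increasing bijection. For a positive integer $n$ with base-$s$ expansion $n=\sum_{i=0}^k\varepsilon_i s^i$ ($\varepsilon_i\in\{0,\dots,s-1\}$, $\varepsilon_k\ne 0$), put $a_n=\sum_{i=0}^k h(\varepsilon_i)p^i$, and put $a_0=h(0)$. Let $b_n=a_n/n^{\log_s p}$ for $n\ge1$. For real $x\ge0$ let $a(x)=a_{\lfloor x\rfloor}$. *)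

From Stdlib Require Import Reals Lra Lia Arith List Sorted.
Open Scope R_scope.

(* The set A ⊂ {0,..,p-1} with #A = s is represented by its increasing
   enumeration, a list A strictly sorted by <, of length s, all entries < p.
   The unique increasing bijection h : {0..s-1} -> A is then i |-> nth i A 0. *)
Definition hmap (A : list nat) (i : nat) : nat := nth i A 0%nat.

(* For n >= 1 with base-s digits eps_i : sum_i h(eps_i) p^i,
   computed by the recursion on the base-s expansion (fuel = n suffices). *)
Fixpoint adig (p s : nat) (A : list nat) (fuel n : nat) : nat :=
  match fuel with
  | O => O
  | S f => if Nat.eqb n 0 then O
           else (hmap A (n mod s) + p * adig p s A f (n / s))%nat
  end.

Definition aseq (p s : nat) (A : list nat) (n : nat) : nat :=
  if Nat.eqb n 0 then hmap A 0 else adig p s A n n.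

Definition logsp (p s : nat) : R := ln (INR p) / ln (INR s).

Definition bseq (p s : nat) (A : list nat) (n : nat) : R :=
  INR (aseq p s A n) / Rpower (INR n) (logsp p s).

Definition areal (p s : nat) (A : list nat) (x : R) : nat :=
  aseq p s A (Z.to_nat (Int_part x)).

Definition bset (p s : nat) (A : list nat) (y : R) : Prop :=
  exists n : nat, (1 <= n)%nat /\ y = bseq p s A n.

Definition is_glb (E : R -> Prop) (m : R) : Prop :=
  (forall y, E y -> m <= y) /\ (forall l, (forall y, E y -> l <= y) -> l <= m).

(* Let alpha = log_s p, so that n^alpha is multiplied by exactly p when n is multiplied by s,
   while appending a base-s digit to n turns a_n into p a_n + h(digit) with 0 <= h(digit) < p.
   Hence k |-> a(s^k x) / (s^k x)^alpha is eventually nondecreasing and bounded by p, so it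
   converges to some lambda(x), and lambda(s x) = lambda(x).  Bernoulli's inequality shows that
   (n+1)^alpha / n^alpha = 1 + O(1/n), so the terms differ from b at floor(s^k x) by
   O(1/(s^k x)) and lambda(x) lies in [m, M].  For density, lambda(n / s^J) lies within
   n^-alpha of b_n, and b drops by at most p^2/(n+1) from n to n+1; walking from an index with
   b_n close to M (append zeros to a good index) to one with b_n close to m (append digits
   s - 1) one meets every window (y - e, y + e]. *)

From Stdlib Require Import Reals Lra Lia ZArith Arith List Sorted.
From Stdlib Require Import Classical ClassicalEpsilon FunctionalExtensionality.
Open Scope R_scope.

Lemma pow_bernoulli r n : 0 <= r <= 1 -> 1 - INR n * (1 - r) <= r ^ n.
Proof.
  intros Hr. induction n as [|n IH]; [simpl; lra|].
  rewrite S_INR. simpl. pose proof (pos_INR n).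
  assert (0 <= r * (r ^ n - (1 - INR n * (1 - r)))) by (apply Rmult_le_pos; lra).
  assert (0 <= INR n * ((1 - r) * (1 - r))) by (apply Rmult_le_pos; nra). nra.
Qed.

Lemma Rpower_gt_0 x y : 0 < Rpower x y.
Proof. apply exp_pos. Qed.

Lemma Rdiv_le_of_le_mul a b c : 0 < b -> a <= c * b -> a / b <= c.
Proof.
  intros Hb H. apply (Rmult_le_reg_r b); auto.
  unfold Rdiv. rewrite Rmult_assoc, Rinv_l; lra.
Qed.

Lemma Rle_div_of_mul_le a b c : 0 < b -> c * b <= a -> c <= a / b.
Proof.
  intros Hb H. apply (Rmult_le_reg_r b); auto.
  unfold Rdiv. rewrite Rmult_assoc, Rinv_l; lra.
Qed.

Lemma nat_pow_bracket s n : (2 <= s)%nat -> (1 <= n)%nat ->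
  exists k, (s ^ k <= n < s ^ S k)%nat.
Proof.
  intros Hs. induction n as [n IH] using (well_founded_induction lt_wf). intros Hn.
  destruct (Nat.lt_ge_cases n s).
  - exists 0%nat. simpl. lia.
  - assert (Hq : (n / s < n)%nat) by (apply Nat.div_lt; lia).
    assert (Hq1 : (1 <= n / s)%nat) by (apply Nat.div_le_lower_bound; lia).
    destruct (IH _ Hq Hq1) as [k Hk]. exists (S k).
    pose proof (Nat.div_mod n s ltac:(lia)). pose proof (Nat.mod_upper_bound n s ltac:(lia)).
    simpl in *. nia.
Qed.

Definition floor_nat (y : R) : nat := Z.to_nat (Int_part y).

Lemma floor_nat_spec y : 0 <= y -> INR (floor_nat y) <= y < INR (floor_nat y) + 1.
Proof.
  intros Hy. destruct (base_Int_part y) as [H1 H2].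
  assert (Hlo : (-1 < Int_part y)%Z) by (apply lt_IZR; simpl; lra).
  unfold floor_nat. rewrite INR_IZR_INZ, Z2Nat.id by lia. lra.
Qed.

Lemma floor_nat_unique y n : INR n <= y < INR n + 1 -> floor_nat y = n.
Proof.
  intros [H1 H2]. pose proof (pos_INR n). destruct (floor_nat_spec y ltac:(lra)) as [H3 H4].
  assert (floor_nat y < n + 1)%nat by (apply INR_lt; rewrite plus_INR; simpl; lra).
  assert (n < floor_nat y + 1)%nat by (apply INR_lt; rewrite plus_INR; simpl; lra).
  lia.
Qed.

Lemma floor_nat_INR n : floor_nat (INR n) = n.
Proof. apply floor_nat_unique. lra. Qed.

Lemma floor_nat_ge_1 y : 1 <= y -> (1 <= floor_nat y)%nat.
Proof.
  intros Hy. destruct (floor_nat_spec y ltac:(lra)) as [_ H].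
  assert (0 < floor_nat y)%nat by (apply INR_lt; simpl; lra). lia.
Qed.

Lemma floor_nat_mul_le s y : 0 <= y -> (s * floor_nat y <= floor_nat (INR s * y))%nat.
Proof.
  intros Hy. pose proof (pos_INR s).
  destruct (floor_nat_spec y Hy) as [H1 _].
  destruct (floor_nat_spec (INR s * y) ltac:(nra)) as [_ H2].
  assert (s * floor_nat y < floor_nat (INR s * y) + 1)%nat; [|lia].
  apply INR_lt. rewrite mult_INR, plus_INR. simpl. nra.
Qed.

Lemma Un_cv_le_eventually u l c N :
  Un_cv u l -> (forall k, (N <= k)%nat -> u k <= c) -> l <= c.
Proof.
  intros Hcv Hb. destruct (Rle_lt_dec l c) as [|Hlt]; auto.
  destruct (Hcv (l - c) ltac:(lra)) as [K HK].
  specialize (HK (Nat.max K N) ltac:(lia)). specialize (Hb (Nat.max K N) ltac:(lia)).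
  unfold Rdist in HK. apply Rabs_def2 in HK. lra.
Qed.

Lemma Un_cv_ge_eventually u l c N :
  Un_cv u l -> (forall k, (N <= k)%nat -> c <= u k) -> c <= l.
Proof.
  intros Hcv Hb. destruct (Rle_lt_dec c l) as [|Hlt]; auto.
  destruct (Hcv (c - l) ltac:(lra)) as [K HK].
  specialize (HK (Nat.max K N) ltac:(lia)). specialize (Hb (Nat.max K N) ltac:(lia)).
  unfold Rdist in HK. apply Rabs_def2 in HK. lra.
Qed.

Lemma slow_descent_crossing (f : nat -> R) c d n :
  (forall i, f i - d <= f (S i)) -> c < f 0%nat -> f n <= c ->
  exists i, (i <= n)%nat /\ c - d <= f i <= c.
Proof.
  intros Hstep H0. induction n as [|n IH]; intros Hn; [lra|].
  destruct (Rle_lt_dec (c - d) (f (S n))).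
  - exists (S n). split; [lia | lra].
  - destruct IH as [i [Hi1 Hi2]]; [pose proof (Hstep n); lra|].
    exists i. split; [lia | lra].
Qed.

Lemma is_lub_approx E M c : is_lub E M -> c < M -> exists z, E z /\ c < z.
Proof.
  intros [_ HM] Hc. apply NNPP. intros Hno.
  assert (M <= c); [|lra]. apply HM. intros z Hz.
  destruct (Rle_lt_dec z c); auto. exfalso. apply Hno. now exists z.
Qed.

Lemma is_glb_approx E m c : is_glb E m -> m < c -> exists z, E z /\ z < c.
Proof.
  intros [_ Hm] Hc. apply NNPP. intros Hno.
  assert (c <= m); [|lra]. apply Hm. intros z Hz.
  destruct (Rle_lt_dec c z); auto. exfalso. apply Hno. now exists z.
Qed.

Lemma glb_exists E : (exists z, E z) -> (exists l, forall z, E z -> l <= z) ->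
  exists m, is_glb E m.
Proof.
  intros [z0 Hz0] [l Hl].
  destruct (completeness (fun z => E (- z))) as [m' [Hub Hlub]].
  - exists (- l). intros z Hz. specialize (Hl _ Hz). lra.
  - exists (- z0). now rewrite Ropp_involutive.
  - exists (- m'). split.
    + intros z Hz. assert (- z <= m'); [|lra]. apply Hub. now rewrite Ropp_involutive.
    + intros l' Hl'. assert (m' <= - l'); [|lra]. apply Hlub. intros z Hz.
      specialize (Hl' _ Hz). lra.
Qed.

Lemma Sorted_lt_nth (l : list nat) i :
  Sorted lt l -> (S i < length l)%nat -> (nth i l 0 < nth (S i) l 0)%nat.
Proof.
  revert i. induction l as [|a l IH]; intros i HS Hi; simpl in Hi; [lia|].
  inversion HS as [|? ? HSl HRel]; subst. destruct i as [|i].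
  - destruct l as [|b l]; simpl in Hi; [lia|]. now inversion HRel.
  - apply IH; auto. lia.
Qed.

Lemma adig_fuel_irrelevant p s A f1 f2 n : (2 <= s)%nat ->
  (n <= f1)%nat -> (n <= f2)%nat -> adig p s A f1 n = adig p s A f2 n.
Proof.
  intros Hs. revert f2 n. induction f1 as [|f1 IH]; intros f2 n H1 H2.
  - replace n with 0%nat by lia. now destruct f2.
  - destruct f2 as [|f2]; [replace n with 0%nat by lia; reflexivity|].
    simpl. destruct (Nat.eqb n 0) eqn:E; [reflexivity|].
    apply Nat.eqb_neq in E.
    assert (n / s < n)%nat by (apply Nat.div_lt; lia).
    rewrite (IH f2 (n / s)%nat); [reflexivity | lia | lia].
Qed.

Section DigitSequence.
Local Open Scope nat_scope.

Variables (p s : nat) (A : list nat).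
Hypotheses (Hs : 2 <= s) (Hsp : s < p) (HAsort : Sorted lt A) (HAlen : length A = s)
  (HAsub : forall a, In a A -> a < p).

(* [aseq] with the convention a_0 = h(0) removed, so that the digit recursion holds at 0 too *)
Definition adigits (n : nat) : nat := adig p s A n n.

Lemma aseq_adigits n : 1 <= n -> aseq p s A n = adigits n.
Proof. intros. unfold aseq. now destruct n; [lia|]. Qed.

Lemma adigits_digit q d : d < s -> 0 < s * q + d ->
  adigits (s * q + d) = hmap A d + p * adigits q.
Proof.
  intros Hd Hn. unfold adigits.
  assert (Hmod : (s * q + d) mod s = d) by (symmetry; apply (Nat.mod_unique _ _ q); lia).
  assert (Hdiv : (s * q + d) / s = q) by (symmetry; apply (Nat.div_unique _ _ _ d); lia).
  assert (Hq : q <= s * q + d - 1) by (pose proof (Nat.mul_le_mono_r 2 s q Hs); lia).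
  revert Hn Hmod Hdiv Hq. generalize (s * q + d) as n. intros n Hn Hmod Hdiv Hq.
  destruct n as [|n]; [lia|]. simpl adig at 1. rewrite Hmod, Hdiv.
  f_equal. f_equal. apply adig_fuel_irrelevant; lia.
Qed.

Lemma pow_s_pos k : 0 < s ^ k.
Proof. apply Nat.neq_0_lt_0, Nat.pow_nonzero. lia. Qed.

Lemma hmap_lt_succ i : S i < s -> hmap A i < hmap A (S i).
Proof. intros. apply Sorted_lt_nth; auto. lia. Qed.

Lemma hmap_lt_p i : i < s -> hmap A i < p.
Proof. intros. apply HAsub. unfold hmap. apply nth_In. lia. Qed.

Lemma adigits_lt_succ n : adigits n < adigits (S n).
Proof.
  induction n as [n IH] using (well_founded_induction lt_wf).
  destruct (Nat.eq_dec n 0) as [->|Hn0].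
  - replace (adigits 1) with (adigits (s * 0 + 1)) by (f_equal; lia).
    rewrite adigits_digit by lia. pose proof (hmap_lt_succ 0). unfold adigits at 1; simpl. lia.
  - set (q := n / s). set (d := n mod s).
    assert (Hd : d < s) by (apply Nat.mod_upper_bound; lia).
    assert (Hn : n = s * q + d) by (apply Nat.div_mod; lia).
    assert (Hq : q < n) by (apply Nat.div_lt; lia).
    destruct (Nat.eq_dec (S d) s) as [E|E].
    + replace (S n) with (s * S q + 0) by lia. rewrite Hn, !adigits_digit by lia.
      pose proof (IH q Hq). pose proof (hmap_lt_p d Hd). nia.
    + replace (S n) with (s * q + S d) by lia. rewrite Hn, !adigits_digit by lia.
      pose proof (hmap_lt_succ d). lia.
Qed.

Lemma adigits_le_mono n m : n <= m -> adigits n <= adigits m.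
Proof. induction 1; [lia|]. pose proof (adigits_lt_succ m). lia. Qed.

Lemma adigits_ge n : n <= adigits n.
Proof. induction n; [lia|]. pose proof (adigits_lt_succ n). lia. Qed.

(* The top digits of [s^j * n + r] are those of [n], the other [j] digits are [< p]. *)
Lemma adigits_block j n r : r < s ^ j -> adigits (s ^ j * n + r) < p ^ j * (adigits n + 1).
Proof.
  revert r. induction j as [|j IH]; intros r Hr.
  - simpl in *. replace r with 0 by lia. rewrite Nat.add_0_r, Nat.add_0_r. lia.
  - assert (Hr' : r / s < s ^ j) by (apply Nat.Div0.div_lt_upper_bound; simpl in Hr; lia).
    assert (Hmod : r mod s < s) by (apply Nat.mod_upper_bound; lia).
    assert (E : s ^ S j * n + r = s * (s ^ j * n + r / s) + r mod s).
    { rewrite Nat.pow_succ_r', (Nat.div_mod r s) at 1 by lia. ring. }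
    assert (0 < p ^ S j) by (apply Nat.neq_0_lt_0, Nat.pow_nonzero; lia).
    destruct (Nat.eq_dec (s ^ S j * n + r) 0) as [Z|Z].
    { rewrite Z. change (adigits 0) with 0. nia. }
    rewrite E, adigits_digit by lia.
    pose proof (IH _ Hr'). pose proof (hmap_lt_p _ Hmod). rewrite Nat.pow_succ_r'. nia.
Qed.

Lemma adigits_mul_s n : p * adigits n <= adigits (s * n).
Proof.
  destruct n as [|n]; [change (adigits 0) with 0; lia|].
  replace (s * S n) with (s * S n + 0) by lia. rewrite adigits_digit by lia. lia.
Qed.

Lemma adigits_mul_pow j n : p ^ j * adigits n <= adigits (s ^ j * n).
Proof.
  induction j as [|j IH]; [rewrite !Nat.pow_0_r, !Nat.mul_1_l; lia|].
  rewrite !Nat.pow_succ_r', <- !Nat.mul_assoc.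
  pose proof (adigits_mul_s (s ^ j * n)). nia.
Qed.

Local Open Scope R_scope.
Local Notation alpha := (logsp p s).

Lemma ln_INR_s_pos : 0 < ln (INR s).
Proof. rewrite <- ln_1. apply ln_increasing; [lra | apply lt_1_INR; lia]. Qed.

Lemma logsp_mul_ln : alpha * ln (INR s) = ln (INR p).
Proof. unfold logsp. pose proof ln_INR_s_pos. field. lra. Qed.

Lemma logsp_ge_1 : 1 <= alpha.
Proof.
  pose proof ln_INR_s_pos. pose proof logsp_mul_ln.
  assert (ln (INR s) < ln (INR p)) by (apply ln_increasing; [apply lt_0_INR | apply lt_INR]; lia).
  nra.
Qed.

Lemma logsp_le_p : alpha <= INR p.
Proof.
  pose proof ln_INR_s_pos. pose proof logsp_mul_ln.
  assert (ln (INR p) < INR p * ln (INR s)).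
  { rewrite <- ln_pow, <- pow_INR by (apply lt_0_INR; lia).
    apply ln_increasing; [apply lt_0_INR; lia | apply lt_INR].
    apply Nat.lt_le_trans with (2 ^ p)%nat.
    - apply Nat.pow_gt_lin_r. lia.
    - apply Nat.pow_le_mono_l. lia. }
  nra.
Qed.

Lemma Rpower_INR_s : Rpower (INR s) alpha = INR p.
Proof. unfold Rpower. rewrite logsp_mul_ln. apply exp_ln, lt_0_INR. lia. Qed.

Lemma Rpower_scale k y : 0 < y -> Rpower (INR s ^ k * y) alpha = INR p ^ k * Rpower y alpha.
Proof.
  intros Hy. assert (Hs0 : 0 < INR s) by (apply lt_0_INR; lia).
  induction k as [|k IH]; [simpl; now rewrite !Rmult_1_l|].
  simpl. rewrite Rmult_assoc, <- Rpower_mult_distr, IH, Rpower_INR_s.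
  - ring.
  - exact Hs0.
  - apply Rmult_lt_0_compat; [apply pow_lt|]; lra.
Qed.

Lemma Rpower_le_compat y z : 0 < y <= z -> Rpower y alpha <= Rpower z alpha.
Proof. intros. apply Rle_Rpower_l; auto. pose proof logsp_ge_1. lra. Qed.

Lemma Rpower_ge_self y : 1 <= y -> y <= Rpower y alpha.
Proof.
  intros. rewrite <- (Rpower_1 y) at 1 by lra. apply Rle_Rpower; auto. apply logsp_ge_1.
Qed.

Lemma Rpower_bernoulli r : 0 < r <= 1 -> 1 - INR p * (1 - r) <= Rpower r alpha.
Proof.
  intros Hr. eapply Rle_trans; [apply pow_bernoulli; lra|].
  rewrite <- Rpower_pow by lra. unfold Rpower.
  assert (ln r <= 0).
  { destruct (Req_dec r 1) as [->|]; [rewrite ln_1; lra|].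
    rewrite <- ln_1. left. apply ln_increasing; lra. }
  pose proof logsp_le_p.
  destruct (Req_dec (INR p * ln r) (alpha * ln r)) as [E|E]; [rewrite E; lra|].
  left. apply exp_increasing. nra.
Qed.

Lemma Rpower_pred_ge z : 1 < z -> Rpower z alpha * (1 - INR p / z) <= Rpower (z - 1) alpha.
Proof.
  intros Hz.
  replace (z - 1) with (z * ((z - 1) / z)) by (field; lra).
  rewrite <- Rpower_mult_distr by (try apply Rdiv_lt_0_compat; lra).
  apply Rmult_le_compat_l; [left; apply Rpower_gt_0|].
  replace (1 - INR p / z) with (1 - INR p * (1 - (z - 1) / z)) by (field; lra).
  apply Rpower_bernoulli. split; [apply Rdiv_lt_0_compat; lra|].
  apply Rdiv_le_of_le_mul; lra.
Qed.

Lemma div_Rpower_pred a z : 0 <= a -> 1 < z ->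
  a / Rpower (z - 1) alpha * (1 - INR p / z) <= a / Rpower z alpha.
Proof.
  intros Ha Hz. pose proof (Rpower_pred_ge z Hz).
  pose proof (Rpower_gt_0 z alpha). pose proof (Rpower_gt_0 (z - 1) alpha).
  apply Rle_div_of_mul_le; auto.
  replace (a / Rpower (z - 1) alpha * (1 - INR p / z) * Rpower z alpha)
    with (a / Rpower (z - 1) alpha * (Rpower z alpha * (1 - INR p / z))) by ring.
  apply Rle_trans with (a / Rpower (z - 1) alpha * Rpower (z - 1) alpha).
  - apply Rmult_le_compat_l; auto. apply Rle_div_of_mul_le; lra.
  - right. field. lra.
Qed.

Lemma bseq_adigits n : (1 <= n)%nat -> bseq p s A n = INR (adigits n) / Rpower (INR n) alpha.
Proof. intros. unfold bseq. now rewrite aseq_adigits. Qed.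

Lemma bseq_pos n : (1 <= n)%nat -> 0 < bseq p s A n.
Proof.
  intros Hn. rewrite bseq_adigits by exact Hn. apply Rdiv_lt_0_compat; [|apply Rpower_gt_0].
  apply lt_0_INR. pose proof (adigits_ge n). lia.
Qed.

Lemma bseq_le_p n : (1 <= n)%nat -> bseq p s A n <= INR p.
Proof.
  intros Hn. rewrite bseq_adigits by exact Hn.
  destruct (nat_pow_bracket s n Hs Hn) as [k [Hk1 Hk2]].
  assert (HA : (adigits n < p ^ S k)%nat).
  { replace n with (s ^ S k * 0 + n)%nat at 1 by lia.
    pose proof (adigits_block (S k) 0 n Hk2). change (adigits 0) with 0%nat in H. lia. }
  assert (HP : INR p ^ k <= Rpower (INR n) alpha).
  { assert (E : Rpower (INR s ^ k * 1) alpha = INR p ^ k).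
    { rewrite Rpower_scale by lra. unfold Rpower. rewrite ln_1, Rmult_0_r, exp_0. ring. }
    rewrite <- E. apply Rpower_le_compat.
    rewrite Rmult_1_r, <- pow_INR. split; [apply lt_0_INR, pow_s_pos|].
    now apply le_INR. }
  apply lt_INR in HA. rewrite pow_INR in HA. simpl in HA.
  apply Rdiv_le_of_le_mul; [apply Rpower_gt_0|].
  assert (INR p * INR p ^ k <= INR p * Rpower (INR n) alpha)
    by (apply Rmult_le_compat_l; [apply pos_INR | exact HP]).
  lra.
Qed.

Lemma bseq_mul_pow j n : (1 <= n)%nat ->
  bseq p s A (s ^ j * n) = INR (adigits (s ^ j * n)) / (INR p ^ j * Rpower (INR n) alpha).
Proof.
  intros Hn. pose proof (pow_s_pos j).
  rewrite bseq_adigits by nia. rewrite mult_INR, pow_INR, Rpower_scale; [reflexivity|].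
  apply lt_0_INR. lia.
Qed.

Lemma bseq_le_mul_pow j n : (1 <= n)%nat -> bseq p s A n <= bseq p s A (s ^ j * n).
Proof.
  intros Hn. rewrite bseq_mul_pow, bseq_adigits by exact Hn.
  pose proof (adigits_mul_pow j n) as H. apply le_INR in H. rewrite mult_INR, pow_INR in H.
  assert (Hpj : 0 < INR p ^ j) by (apply pow_lt, lt_0_INR; lia).
  pose proof (Rpower_gt_0 (INR n) alpha).
  apply Rle_div_of_mul_le; [apply Rmult_lt_0_compat; auto|].
  replace (INR (adigits n) / Rpower (INR n) alpha * (INR p ^ j * Rpower (INR n) alpha))
    with (INR p ^ j * INR (adigits n)) by (field; lra).
  exact H.
Qed.

Lemma bseq_mul_pow_le j n : (1 <= n)%nat ->
  bseq p s A (s ^ j * n) <= bseq p s A n + / Rpower (INR n) alpha.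
Proof.
  intros Hn. rewrite bseq_mul_pow, bseq_adigits by exact Hn.
  pose proof (adigits_block j n 0 (pow_s_pos j)) as H. rewrite Nat.add_0_r in H.
  apply lt_INR in H. rewrite mult_INR, pow_INR, plus_INR in H. change (INR 1) with 1 in H.
  assert (Hpj : 0 < INR p ^ j) by (apply pow_lt, lt_0_INR; lia).
  pose proof (Rpower_gt_0 (INR n) alpha).
  apply Rdiv_le_of_le_mul; [apply Rmult_lt_0_compat; auto|].
  replace ((INR (adigits n) / Rpower (INR n) alpha + / Rpower (INR n) alpha)
             * (INR p ^ j * Rpower (INR n) alpha))
    with (INR p ^ j * (INR (adigits n) + 1)) by (field; lra).
  lra.
Qed.

(* Since [b_n <= p], the relative loss [p / (n + 1)] from Bernoulli's inequality costs at most
   [p^2 / (n + 1)]. *)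
Lemma bseq_sub_le_div n y : (1 <= n)%nat -> INR n <= y <= INR n + 1 ->
  bseq p s A n - INR p * INR p / (INR n + 1) <= INR (adigits n) / Rpower y alpha.
Proof.
  intros Hn Hy. assert (Hn1 : 1 <= INR n) by (apply (le_INR 1); exact Hn).
  pose proof (bseq_le_p n Hn) as Hb.
  pose proof (div_Rpower_pred (INR (adigits n)) (INR n + 1) (pos_INR _) ltac:(lra)) as H.
  replace (INR n + 1 - 1) with (INR n) in H by ring. rewrite <- bseq_adigits in H by exact Hn.
  assert (INR (adigits n) / Rpower (INR n + 1) alpha <= INR (adigits n) / Rpower y alpha).
  { unfold Rdiv. apply Rmult_le_compat_l; [apply pos_INR|].
    apply Rinv_le_contravar; [apply Rpower_gt_0|]. apply Rpower_le_compat. lra. }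
  set (t := INR p / (INR n + 1)) in *.
  assert (0 <= t) by (apply Rlt_le, Rdiv_lt_0_compat; [apply lt_0_INR; lia | lra]).
  assert (bseq p s A n * t <= INR p * t) by (apply Rmult_le_compat_r; auto).
  replace (INR p * INR p / (INR n + 1)) with (INR p * t) by (unfold t, Rdiv; ring).
  lra.
Qed.

Lemma bseq_succ_ge n : (1 <= n)%nat ->
  bseq p s A n - INR p * INR p / (INR n + 1) <= bseq p s A (S n).
Proof.
  intros Hn. eapply Rle_trans; [apply (bseq_sub_le_div n (INR n + 1)); auto; lra|].
  rewrite (bseq_adigits (S n)), S_INR by lia. unfold Rdiv.
  apply Rmult_le_compat_r; [left; apply Rinv_0_lt_compat, Rpower_gt_0|].
  apply le_INR, Nat.lt_le_incl, adigits_lt_succ.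
Qed.

(* From [m] to [m + 1] the numerator grows by a factor at most [(m + 1) / m] since [m <= a_m],
   the denominator by a factor at least [(m + 1) / m] since [alpha >= 1]. *)
Lemma adigits_succ_div_le m : (1 <= m)%nat ->
  (INR (adigits m) + 1) / Rpower (INR m + 1) alpha <= bseq p s A m.
Proof.
  intros Hm. rewrite bseq_adigits by exact Hm.
  assert (Hm1 : 1 <= INR m) by (apply (le_INR 1); exact Hm).
  set (a := INR (adigits m)). assert (Ha : INR m <= a) by (apply le_INR, adigits_ge).
  set (Q := (INR m + 1) / INR m).
  assert (HQ : 1 <= Q) by (apply Rle_div_of_mul_le; lra).
  assert (HPQ : Rpower (INR m) alpha * Q <= Rpower (INR m + 1) alpha).
  { replace (INR m + 1) with (INR m * Q) by (unfold Q; field; lra).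
    rewrite <- Rpower_mult_distr by lra.
    apply Rmult_le_compat_l; [left; apply Rpower_gt_0|]. now apply Rpower_ge_self. }
  pose proof (Rpower_gt_0 (INR m) alpha).
  apply Rdiv_le_of_le_mul; [apply Rpower_gt_0|].
  apply Rle_trans with (a / Rpower (INR m) alpha * (Rpower (INR m) alpha * Q)).
  - replace (a / Rpower (INR m) alpha * (Rpower (INR m) alpha * Q)) with (a * (INR m + 1) / INR m)
      by (unfold Q; field; lra).
    apply Rle_div_of_mul_le; lra.
  - apply Rmult_le_compat_l; [|exact HPQ]. apply Rlt_le, Rdiv_lt_0_compat; lra.
Qed.

(* [s ^ j * m + (s ^ j - 1)] is [m] followed by [j] digits [s - 1]. *)
Lemma bseq_pad_le j m : (1 <= m)%nat ->
  bseq p s A (s ^ j * m + (s ^ j - 1)) <= bseq p s A m + INR p * INR p / (INR s ^ j * (INR m + 1)).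
Proof.
  intros Hm. pose proof (pow_s_pos j) as Hsj.
  set (n := (s ^ j * m + (s ^ j - 1))%nat).
  assert (Hn : (1 <= n)%nat) by (unfold n; nia).
  set (T := INR s ^ j * (INR m + 1)).
  assert (ET : INR n = T - 1).
  { unfold n, T. rewrite plus_INR, minus_INR, mult_INR, pow_INR by lia.
    change (INR 1) with 1. ring. }
  assert (HT : 1 < T) by (pose proof (le_INR 1 n Hn); simpl in *; lra).
  pose proof (div_Rpower_pred (INR (adigits n)) T (pos_INR _) HT) as H.
  rewrite <- ET, <- bseq_adigits in H by exact Hn.
  assert (HAn : INR (adigits n) < INR p ^ j * (INR (adigits m) + 1)).
  { pose proof (adigits_block j m (s ^ j - 1) ltac:(lia)) as Hb. apply lt_INR in Hb.
    rewrite mult_INR, pow_INR, plus_INR in Hb. exact Hb. }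
  assert (Hpj : 0 < INR p ^ j) by (apply pow_lt, lt_0_INR; lia).
  assert (INR (adigits n) / Rpower T alpha <= bseq p s A m).
  { eapply Rle_trans; [|apply adigits_succ_div_le; exact Hm].
    unfold T. rewrite Rpower_scale by (pose proof (pos_INR m); lra).
    rewrite Rdiv_mult_distr. unfold Rdiv at 1 3.
    apply Rmult_le_compat_r; [left; apply Rinv_0_lt_compat, Rpower_gt_0|].
    apply Rdiv_le_of_le_mul; lra. }
  pose proof (bseq_le_p n Hn).
  assert (0 <= INR p / T) by (apply Rlt_le, Rdiv_lt_0_compat; [apply lt_0_INR; lia | lra]).
  assert (bseq p s A n * (INR p / T) <= INR p * (INR p / T)) by (apply Rmult_le_compat_r; auto).
  replace (INR p * INR p / T) with (INR p * (INR p / T)) by (unfold Rdiv; ring).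
  fold n. lra.
Qed.

Definition ascaled (x : R) (k : nat) : R :=
  INR (areal p s A (INR s ^ k * x)) / Rpower (INR s ^ k * x) alpha.

Definition lambda (x : R) : R := epsilon (inhabits 0) (fun l => Un_cv (ascaled x) l).

Lemma INR_s_pow_gt_0 k : 0 < INR s ^ k.
Proof. apply pow_lt, lt_0_INR. lia. Qed.

Lemma pow_mul_eventually_ge x c : 0 < x ->
  exists k0, forall k, (k0 <= k)%nat -> c <= INR s ^ k * x.
Proof.
  intros Hx. destruct (INR_unbounded (c / x)) as [n Hn]. exists n. intros k Hk.
  assert (INR n <= INR s ^ k).
  { rewrite <- pow_INR. apply le_INR, Nat.le_trans with k; [exact Hk|].
    apply Nat.lt_le_incl, Nat.pow_gt_lin_r. lia. }
  replace c with (c / x * x) by (field; lra). apply Rmult_le_compat_r; lra.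
Qed.

Lemma ascaled_adigits x k : 1 <= INR s ^ k * x ->
  ascaled x k = INR (adigits (floor_nat (INR s ^ k * x))) / Rpower (INR s ^ k * x) alpha.
Proof.
  intros Hk. unfold ascaled, areal. fold (floor_nat (INR s ^ k * x)).
  rewrite aseq_adigits; [reflexivity|]. now apply floor_nat_ge_1.
Qed.

(* Multiplying the argument by [s] appends a digit, multiplying [a] by at least [p = s^alpha]. *)
Lemma ascaled_le_succ x k : 1 <= INR s ^ k * x -> ascaled x k <= ascaled x (S k).
Proof.
  intros Hk. pose proof (lt_1_INR s ltac:(lia)).
  assert (Ey : INR s ^ S k * x = INR s * (INR s ^ k * x)) by (simpl; ring).
  assert (Hk' : 1 <= INR s ^ S k * x) by (rewrite Ey; nra).
  rewrite !ascaled_adigits by assumption. rewrite Ey.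
  set (y := INR s ^ k * x) in *.
  assert (EP : Rpower (INR s * y) alpha = INR p * Rpower y alpha).
  { rewrite <- (pow_1 (INR s)), Rpower_scale by lra. now rewrite pow_1. }
  assert (HA : INR p * INR (adigits (floor_nat y)) <= INR (adigits (floor_nat (INR s * y)))).
  { rewrite <- mult_INR. apply le_INR.
    eapply Nat.le_trans; [apply adigits_mul_s|].
    apply adigits_le_mono, floor_nat_mul_le. lra. }
  pose proof (Rpower_gt_0 y alpha). pose proof (lt_0_INR p ltac:(lia)).
  rewrite EP. apply Rle_div_of_mul_le; [nra|].
  replace (INR (adigits (floor_nat y)) / Rpower y alpha * (INR p * Rpower y alpha))
    with (INR p * INR (adigits (floor_nat y))) by (field; lra).
  exact HA.
Qed.

Lemma ascaled_growing x k : 1 <= INR s ^ k * x -> Un_growing (fun j => ascaled x (j + k)).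
Proof.
  intros Hk j. simpl. apply ascaled_le_succ.
  rewrite pow_add. pose proof (pow_R1_Rle (INR s) j ltac:(apply (le_INR 1); lia)). nra.
Qed.

Lemma ascaled_le_bseq x k : 1 <= INR s ^ k * x ->
  ascaled x k <= bseq p s A (floor_nat (INR s ^ k * x)).
Proof.
  intros Hk. pose proof (floor_nat_ge_1 _ Hk) as HN.
  rewrite ascaled_adigits, bseq_adigits by assumption.
  unfold Rdiv. apply Rmult_le_compat_l; [apply pos_INR|].
  apply Rinv_le_contravar; [apply Rpower_gt_0|]. apply Rpower_le_compat.
  split; [apply lt_0_INR; lia | apply floor_nat_spec; lra].
Qed.

Lemma ascaled_ge_bseq x k : 1 <= INR s ^ k * x ->
  bseq p s A (floor_nat (INR s ^ k * x))
    - INR p * INR p / (INR (floor_nat (INR s ^ k * x)) + 1) <= ascaled x k.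
Proof.
  intros Hk. rewrite ascaled_adigits by exact Hk.
  apply bseq_sub_le_div; [now apply floor_nat_ge_1|].
  destruct (floor_nat_spec (INR s ^ k * x)); lra.
Qed.

Lemma ascaled_cv x : 0 < x -> exists l, Un_cv (ascaled x) l.
Proof.
  intros Hx. destruct (pow_mul_eventually_ge x 1 Hx) as [k0 Hk0].
  destruct (growing_cv (fun j => ascaled x (j + k0))) as [l Hl].
  - apply ascaled_growing, Hk0. lia.
  - exists (INR p). intros z [j ->].
    assert (Hj : 1 <= INR s ^ (j + k0) * x) by (apply Hk0; lia).
    eapply Rle_trans; [apply ascaled_le_bseq, Hj|]. now apply bseq_le_p, floor_nat_ge_1.
  - exists l. now apply CV_shift with k0.
Qed.

Lemma Un_cv_lambda x : 0 < x -> Un_cv (ascaled x) (lambda x).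
Proof. intros Hx. unfold lambda. apply epsilon_spec, ascaled_cv, Hx. Qed.

Lemma lambda_mul_s x : 0 < x -> lambda (INR s * x) = lambda x.
Proof.
  intros Hx.
  assert (Hsx : 0 < INR s * x) by (apply Rmult_lt_0_compat; [apply lt_0_INR; lia | exact Hx]).
  assert (E : ascaled (INR s * x) = fun k => ascaled x (k + 1)).
  { apply functional_extensionality. intro k. unfold ascaled.
    replace (INR s ^ (k + 1) * x) with (INR s ^ k * (INR s * x)) by (rewrite pow_add; simpl; ring).
    reflexivity. }
  apply (UL_sequence (ascaled (INR s * x))); [now apply Un_cv_lambda|].
  rewrite E. apply CV_shift', Un_cv_lambda, Hx.
Qed.

Lemma ascaled_le_lambda x k : 0 < x -> 1 <= INR s ^ k * x -> ascaled x k <= lambda x.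
Proof.
  intros Hx Hk.
  apply (growing_ineq (fun j => ascaled x (j + k)) (lambda x) (ascaled_growing x k Hk)
           (CV_shift' _ k _ (Un_cv_lambda x Hx)) 0%nat).
Qed.

Lemma lambda_le_ub M x : (forall n, (1 <= n)%nat -> bseq p s A n <= M) -> 0 < x -> lambda x <= M.
Proof.
  intros HM Hx. destruct (pow_mul_eventually_ge x 1 Hx) as [k0 Hk0].
  apply (Un_cv_le_eventually _ _ _ k0 (Un_cv_lambda x Hx)). intros k Hk.
  eapply Rle_trans; [apply ascaled_le_bseq, Hk0, Hk|]. now apply HM, floor_nat_ge_1, Hk0.
Qed.

Lemma lambda_ge_lb m x : (forall n, (1 <= n)%nat -> m <= bseq p s A n) -> 0 < x -> m <= lambda x.
Proof.
  intros Hm Hx. apply Rle_plus_epsilon. intros eps Heps.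
  destruct (pow_mul_eventually_ge x (Rmax 1 (INR p * INR p / eps)) Hx) as [k Hk].
  specialize (Hk k (Nat.le_refl k)).
  assert (H1 : 1 <= INR s ^ k * x) by (eapply Rle_trans; [apply Rmax_l | exact Hk]).
  set (N := floor_nat (INR s ^ k * x)) in *.
  destruct (floor_nat_spec (INR s ^ k * x)) as [_ HN]; [lra|]. fold N in HN.
  assert (Hstep : INR p * INR p / (INR N + 1) <= eps).
  { apply Rdiv_le_of_le_mul; [lra|].
    pose proof (Rmax_r 1 (INR p * INR p / eps)).
    replace (INR p * INR p) with (INR p * INR p / eps * eps) by (field; lra).
    rewrite (Rmult_comm eps). apply Rmult_le_compat_r; lra. }
  pose proof (Hm N (floor_nat_ge_1 _ H1)).
  pose proof (ascaled_ge_bseq x k H1) as Hlow. fold N in Hlow.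
  pose proof (ascaled_le_lambda x k Hx H1). lra.
Qed.

Lemma lambda_at_integer n J : (1 <= n)%nat ->
  bseq p s A n <= lambda (INR n / INR s ^ J) <= bseq p s A n + / Rpower (INR n) alpha.
Proof.
  intros Hn. set (x := INR n / INR s ^ J).
  pose proof (INR_s_pow_gt_0 J).
  assert (Hx : 0 < x) by (unfold x; apply Rdiv_lt_0_compat; [apply lt_0_INR; lia | lra]).
  assert (E : forall k, (J <= k)%nat -> ascaled x k = bseq p s A (s ^ (k - J) * n)).
  { intros k Hk. assert (Ey : INR s ^ k * x = INR (s ^ (k - J) * n)).
    { unfold x. rewrite mult_INR, pow_INR. replace k with ((k - J) + J)%nat at 1 by lia.
      rewrite pow_add. field. lra. }
    unfold ascaled, areal. rewrite Ey. fold (floor_nat (INR (s ^ (k - J) * n))).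
    now rewrite floor_nat_INR. }
  pose proof (Un_cv_lambda x Hx) as Hl. split.
  - apply (Un_cv_ge_eventually _ _ _ J Hl). intros k Hk. rewrite E by exact Hk.
    now apply bseq_le_mul_pow.
  - apply (Un_cv_le_eventually _ _ _ J Hl). intros k Hk. rewrite E by exact Hk.
    now apply bseq_mul_pow_le.
Qed.

Lemma bseq_gt_beyond M c N : is_lub (bset p s A) M -> c < M ->
  exists n, (N <= n)%nat /\ (1 <= n)%nat /\ c < bseq p s A n.
Proof.
  intros Hlub Hc.
  destruct (is_lub_approx _ _ c Hlub Hc) as [z [[n0 [Hn0 ->]] Hb0]].
  exists (s ^ N * n0)%nat.
  assert (N < s ^ N)%nat by (apply Nat.pow_gt_lin_r; lia).
  repeat split; [nia | nia |]. eapply Rlt_le_trans; [exact Hb0 | now apply bseq_le_mul_pow].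
Qed.

Lemma bseq_le_beyond m c N : is_glb (bset p s A) m -> m < c ->
  exists n, (N <= n)%nat /\ bseq p s A n <= c.
Proof.
  intros Hglb Hc. set (d := (c - m) / 2).
  destruct (is_glb_approx _ _ (c - d) Hglb ltac:(unfold d; lra)) as [z [[m0 [Hm0 ->]] Hbm0]].
  pose proof (lt_0_INR p ltac:(lia)) as Hp0.
  destruct (INR_unbounded (INR p * INR p / d + INR N)) as [j Hj].
  assert (Hsj : (j < s ^ j)%nat) by (apply Nat.pow_gt_lin_r; lia).
  set (T := INR s ^ j * (INR m0 + 1)).
  assert (HT : INR j < T).
  { apply Rlt_le_trans with (INR (s ^ j)); [now apply lt_INR|].
    unfold T. rewrite pow_INR. pose proof (INR_s_pow_gt_0 j). pose proof (pos_INR m0). nra. }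
  assert (Hpd : 0 <= INR p * INR p / d) by (apply Rlt_le, Rdiv_lt_0_compat; unfold d; nra).
  exists (s ^ j * m0 + (s ^ j - 1))%nat. split.
  - assert (INR N < INR j) by lra. apply INR_lt in H. nia.
  - pose proof (bseq_pad_le j m0 Hm0) as Hpad. fold T in Hpad.
    assert (INR p * INR p / T <= d); [|lra].
    apply Rdiv_le_of_le_mul; [pose proof (pos_INR j); lra|].
    replace (INR p * INR p) with (INR p * INR p / d * d) by (unfold d; field; lra).
    rewrite (Rmult_comm d). apply Rmult_le_compat_r; [unfold d; lra|].
    pose proof (pos_INR N). lra.
Qed.

(* Between an index where [b > y - e] and a later one where [b <= y + e], [b] descends
   by less than [e] per step. *)
Lemma bseq_hits_window m M y e N : is_glb (bset p s A) m -> is_lub (bset p s A) M ->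
  m <= y <= M -> 0 < e ->
  exists n, (N <= n)%nat /\ (1 <= n)%nat /\ y - e < bseq p s A n <= y + e.
Proof.
  intros Hglb Hlub [Hy1 Hy2] He.
  destruct (INR_unbounded (INR p * INR p / e)) as [K HK].
  destruct (bseq_gt_beyond M (y - e) (N + K) Hlub ltac:(lra)) as [n1 [Hn1 [Hn1pos Hb1]]].
  destruct (Rle_lt_dec (bseq p s A n1) (y + e)) as [Hc|Hc].
  { exists n1. repeat split; [lia | lia | lra | lra]. }
  destruct (bseq_le_beyond m (y + e) n1 Hglb ltac:(lra)) as [n2 [Hn12 Hb2]].
  set (f := fun i => bseq p s A (n1 + i)).
  assert (Hstep : forall i, f i - e <= f (S i)).
  { intro i. unfold f. rewrite Nat.add_succ_r.
    eapply Rle_trans; [|apply bseq_succ_ge; lia]. apply Rplus_le_compat_l, Ropp_le_contravar.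
    apply Rdiv_le_of_le_mul; [pose proof (pos_INR (n1 + i)); lra|].
    assert (INR K <= INR (n1 + i)) by (apply le_INR; lia).
    replace (INR p * INR p) with (INR p * INR p / e * e) by (field; lra).
    rewrite (Rmult_comm e). apply Rmult_le_compat_r; lra. }
  destruct (slow_descent_crossing f (y + e) e (n2 - n1)) as [i [Hi1 Hi2]]; auto.
  - unfold f. now rewrite Nat.add_0_r.
  - unfold f. now replace (n1 + (n2 - n1))%nat with n2 by lia.
  - exists (n1 + i)%nat. unfold f in Hi2. repeat split; [lia | lia | lra | lra].
Qed.

Lemma lambda_dense m M y eps : is_glb (bset p s A) m -> is_lub (bset p s A) M ->
  m <= y <= M -> 0 < eps ->
  exists x, / INR s <= x < 1 /\ Rabs (lambda x - y) < eps.
Proof.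
  intros Hglb Hlub Hy Heps.
  destruct (INR_unbounded (2 / eps)) as [N HN].
  destruct (bseq_hits_window m M y (eps / 2) N Hglb Hlub Hy ltac:(lra)) as [n [HNn [Hn Hb]]].
  destruct (nat_pow_bracket s n Hs Hn) as [k [Hk1 Hk2]].
  apply le_INR in Hk1. apply lt_INR in Hk2. rewrite !pow_INR in Hk1, Hk2.
  pose proof (INR_s_pow_gt_0 k). pose proof (lt_1_INR s ltac:(lia)).
  assert (Hn1 : 1 <= INR n) by (apply (le_INR 1); exact Hn).
  exists (INR n / INR s ^ S k). split.
  - split.
    + apply Rle_div_of_mul_le; [apply INR_s_pow_gt_0|]. simpl.
      replace (/ INR s * (INR s * INR s ^ k)) with (INR s ^ k) by (field; lra). exact Hk1.
    + apply (Rmult_lt_reg_r (INR s ^ S k)); [apply INR_s_pow_gt_0|].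
      unfold Rdiv. rewrite Rmult_assoc, Rinv_l, Rmult_1_r, Rmult_1_l; [exact Hk2|].
      apply Rgt_not_eq, INR_s_pow_gt_0.
  - destruct (lambda_at_integer n (S k) Hn) as [L1 L2].
    assert (HnN : 2 / eps < INR n) by (apply le_INR in HNn; lra).
    assert (/ Rpower (INR n) alpha < eps / 2).
    { apply Rle_lt_trans with (/ INR n).
      - apply Rinv_le_contravar; [lra | now apply Rpower_ge_self].
      - rewrite <- Rinv_div. apply Rinv_lt_contravar; [|exact HnN].
        apply Rmult_lt_0_compat; [apply Rdiv_lt_0_compat|]; lra. }
    apply Rabs_def1; lra.
Qed.

End DigitSequence.

Theorem mainTheorem9 (p s : nat) (A : list nat)
  (Hp : (3 <= p)%nat) (Hs2 : (2 <= s)%nat) (Hsp : (s < p)%nat)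
  (HAsort : Sorted lt A) (HAlen : length A = s)
  (HAsub : forall a, In a A -> (a < p)%nat) :
  exists lam : R -> R,
    (forall x : R, 0 < x ->
       Un_cv (fun k : nat =>
                INR (areal p s A (INR s ^ k * x))
                / Rpower (INR s ^ k * x) (logsp p s))
             (lam x)) /\
    (forall x : R, 0 < x -> lam (INR s * x) = lam x) /\
    exists m M : R,
      is_glb (bset p s A) m /\ is_lub (bset p s A) M /\
      (forall x : R, 0 < x -> m <= lam x <= M) /\
      (forall y : R, m <= y <= M -> forall eps : R, 0 < eps ->
         exists x : R, / INR s <= x < 1 /\ Rabs (lam x - y) < eps).
Proof.
  assert (Hb1 : bset p s A (bseq p s A 1)) by (exists 1%nat; split; auto).
  destruct (glb_exists (bset p s A)) as [m Hm].
  { now exists (bseq p s A 1). }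
  { exists 0. intros z [n [Hn ->]]. now apply Rlt_le, bseq_pos. }
  destruct (completeness (bset p s A)) as [M HM].
  { exists (INR p). intros z [n [Hn ->]]. now apply bseq_le_p. }
  { now exists (bseq p s A 1). }
  exists (lambda p s A). split; [|split].
  - exact (Un_cv_lambda p s A Hs2 Hsp HAsort HAlen HAsub).
  - exact (lambda_mul_s p s A Hs2 Hsp HAsort HAlen HAsub).
  - exists m, M. split; [exact Hm|]. split; [exact HM|]. split.
    + intros x Hx. split.
      * apply lambda_ge_lb; auto. intros n Hn. apply (proj1 Hm). now exists n.
      * apply lambda_le_ub; auto. intros n Hn. apply (proj1 HM). now exists n.
    + intros y Hy eps Heps. now apply (lambda_dense p s A Hs2 Hsp HAsort HAlen HAsub m M).
Qed.
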